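(* For every NBA $\mathcal A$, the relation $P(\sqsubset^{\mathrm{bw\text{-}di}},\subseteq^{\mathrm{di}})$ is good for pruning, i.e. $\mathcal L(\mathrm{Prune}(\mathcal A,P(\sqsubset^{\mathrm{bw\text{-}di}},\subseteq^{\mathrm{di}})))=\mathcal L(\mathcal A)$.
   Context: An NBA is $\mathcal A=(\Sigma,Q,I,F,\delta)$, $\delta\subseteq Q\times\Sigma\times Q$, assumed forward and backward complete; initial traces start in $I$, fair traces are infinite and visit $F$ infinitely often; the language is the set of infinite words with an initial fair trace. Backward direct simulation $\sqsubseteq^{\mathrm{bw\text{-}di}}$: in the game from $(p_0,q_0)$, at round $i$ from $(p_i,q_i)$ Spoiler picks $p_{i+1}\xrightarrow{\sigma_i}p_i$ and Duplicator answers $q_{i+1}\xrightarrow{\sigma_i}q_i$; Duplicator wins the infinite play if for all $i$, $p_i\in F\Rightarrow q_i\in F$ and $p_i\in I\Rightarrow q_i\in I$; $p\sqsubseteq^{\mathrm{bw\text{-}di}}q$ iff Duplicator has a winning strategy from $(p,q)$; $\sqsubset^{\mathrm{bw\text{-}di}}$ is its strict part ($p\sqsubseteq q$ and not $q\sqsubseteq p$). Direct trace inclusion: $p\subseteq^{\mathrm{di}}q$ iff for every infinite word $\sigma_0\sigma_1\cdots$ and infinite trace $p=p_0\xrightarrow{\sigma_0}p_1\cdots$ there is an infinite trace $q=q_0\xrightarrow{\sigma_0}q_1\cdots$ with $p_i\in F\Rightarrow q_i\in F$ for all $i$. $\mathrm{Prune}(\mathcal A,P)$ has transition set $\{t\in\delta:\nexists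 t'\in\delta,(t,t')\in P\}$; $P(R_b,R_f)=\{((p,\sigma,r),(p',\sigma,r'))\in\delta\times\delta:p\,R_b\,p',\ r\,R_f\,r'\}$. *)

From mathcomp Require Import all_boot.
Set Implicit Arguments. Unset Strict Implicit. Unset Printing Implicit Defensive.

(* An NBA A = (Sigma, Q, I, F, delta) with Sigma, Q finite types,
   I, F : Q -> Prop and delta : Q -> Sigma -> Q -> Prop
   (delta p a r  means  p --a--> r). *)
Record NBA (Sigma Q : finType) := mkNBA {
  init : Q -> Prop;
  fin : Q -> Prop;
  delta : Q -> Sigma -> Q -> Prop }.

Definition forward_complete (Sigma Q : finType) (A : NBA Sigma Q) : Prop :=
  forall (p : Q) (a : Sigma), exists r, delta A p a r.

Definition backward_complete (Sigma Q : finType) (A : NBA Sigma Q) : Prop :=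
  forall (r : Q) (a : Sigma), exists p, delta A p a r.

Definition is_trace (Sigma Q : finType) (A : NBA Sigma Q)
  (w : nat -> Sigma) (t : nat -> Q) : Prop :=
  forall i, delta A (t i) (w i) (t i.+1).

Definition accepts (Sigma Q : finType) (A : NBA Sigma Q) (w : nat -> Sigma) : Prop :=
  exists t : nat -> Q, init A (t 0) /\ is_trace A w t /\
    (forall n, exists m, n <= m /\ fin A (t m)).

(* A Spoiler play from p is a word s and
   states ps with ps 0 = p and ps (i+1) --s i--> ps i.  A Duplicator strategy
   maps the history of Spoiler's moves [(s 0, ps 1); ...; (s i, ps (i+1))]
   to Duplicator's answer q_{i+1}. *)
Definition dup_strategy (Sigma Q : finType) := seq (Sigma * Q) -> Q.

Definition history (Sigma Q : finType) (s : nat -> Sigma) (ps : nat -> Q) (n : nat)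
  : seq (Sigma * Q) := [seq (s j, ps j.+1) | j <- iota 0 n].

Definition dup_states (Sigma Q : finType) (f : dup_strategy Sigma Q) (q : Q)
  (s : nat -> Sigma) (ps : nat -> Q) (i : nat) : Q :=
  match i with 0 => q | i'.+1 => f (history s ps i'.+1) end.

Definition bw_di_winning (Sigma Q : finType) (A : NBA Sigma Q)
  (f : dup_strategy Sigma Q) (p q : Q) : Prop :=
  forall (s : nat -> Sigma) (ps : nat -> Q),
    ps 0 = p -> (forall i, delta A (ps i.+1) (s i) (ps i)) ->
    let qs := dup_states f q s ps in
    (forall i, delta A (qs i.+1) (s i) (qs i)) /\
    (forall i, (fin A (ps i) -> fin A (qs i)) /\ (init A (ps i) -> init A (qs i))).

Definition bw_di_sim (Sigma Q : finType) (A : NBA Sigma Q) (p q : Q) : Prop :=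
  exists f : dup_strategy Sigma Q, bw_di_winning A f p q.

Definition bw_di_strict (Sigma Q : finType) (A : NBA Sigma Q) (p q : Q) : Prop :=
  bw_di_sim A p q /\ ~ bw_di_sim A q p.

Definition di_trace_incl (Sigma Q : finType) (A : NBA Sigma Q) (p q : Q) : Prop :=
  forall (w : nat -> Sigma) (tp : nat -> Q), tp 0 = p -> is_trace A w tp ->
    exists tq : nat -> Q, tq 0 = q /\ is_trace A w tq /\
      (forall i, fin A (tp i) -> fin A (tq i)).

Definition trans_rel (Sigma Q : finType) := (Q * Sigma * Q) -> (Q * Sigma * Q) -> Prop.

Definition in_delta (Sigma Q : finType) (A : NBA Sigma Q) (t : Q * Sigma * Q) : Prop :=
  delta A t.1.1 t.1.2 t.2.

Definition P_rel (Sigma Q : finType) (A : NBA Sigma Q) (Rb Rf : Q -> Q -> Prop)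
  : trans_rel Sigma Q :=
  fun t t' => in_delta A t /\ in_delta A t' /\ t.1.2 = t'.1.2 /\
              Rb t.1.1 t'.1.1 /\ Rf t.2 t'.2.

Definition Prune (Sigma Q : finType) (A : NBA Sigma Q) (P : trans_rel Sigma Q)
  : NBA Sigma Q :=
  mkNBA (init A) (fin A)
    (fun p a r => delta A p a r /\ ~ exists t', in_delta A t' /\ P (p, a, r) t').

From mathcomp Require Import all_boot zify boolp.
Set Implicit Arguments. Unset Strict Implicit. Unset Printing Implicit Defensive.

(* Fix an accepting run [pi] of [A] and call a run dominating if it is initial
   and visits [F] whenever [pi] does. If a dominating run [tau] takes a pruned
   transition [tau i -> tau (i+1)], witnessed by [p' -> r'] with [tau i] strictly
   backward-simulated by [p'] and [tau (i+1)] trace-included in [r'], then the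
   prefix can be pushed up along the simulation to end in [p'] and continued by a
   trace from [r']; the result is again dominating, weakly higher on the prefix
   and strictly higher at [i]. Ranking prefixes lexicographically by the sizes
   of their up-sets in the (finite) simulation preorder, this improvement must
   stop, so every prefix length is realised by pruned transitions, and König's
   lemma yields an accepting run of the pruned automaton. *)

Definition scons (T : Type) (x : T) (u : nat -> T) (j : nat) : T :=
  if j is j'.+1 then u j' else x.

Definition fupd (T : Type) (u : nat -> T) (n : nat) (x : T) (j : nat) : T :=
  if j == n then x else u j.

Definition splice (T : Type) (u v : nat -> T) (n j : nat) : T :=
  if j <= n then u j else v (j - n.+1).

Lemma splice_le (T : Type) (u v : nat -> T) n j : j <= n -> splice u v n j = u j.
Proof. by rewrite /splice => ->. Qed.

Lemma splice_gt (T : Type) (u v : nat -> T) n j :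
  n < j -> splice u v n j = v (j - n.+1).
Proof. by move=> nj; rewrite /splice ifN // -ltnNge. Qed.

Fixpoint lexnum (B : nat) (u : nat -> nat) (k : nat) : nat :=
  if k is k'.+1 then lexnum B u k' * B + u k' else 0.

Lemma lexnum_le B u v k :
  (forall j, j < k -> u j <= v j) -> lexnum B u k <= lexnum B v k.
Proof.
elim: k => [|k IH] //= le_uv.
by rewrite leq_add ?leq_mul ?IH // => [j jk|]; apply: le_uv; lia.
Qed.

Lemma lexnum_lt B u v i k : (forall j, u j < B) -> i < k ->
  (forall j, j <= i -> u j <= v j) -> u i < v i -> lexnum B u k < lexnum B v k.
Proof.
move=> u_lt_B; elim: k => [|k IH] //= ik le_uv lt_i.
case: (ltngtP i k) => [ik'|ki|<-].
- have := IH ik' le_uv lt_i; have := u_lt_B k; nia.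
- lia.
- have := lexnum_le B (k := i) (fun j ji => le_uv j (ltnW ji)); nia.
Qed.

Section UpSets.
Variables (T : finType) (le : T -> T -> Prop).
Hypotheses (le_refl : forall x, le x x)
           (le_trans : forall x y z, le x y -> le y z -> le x z).

Definition up_set (x : T) : {set T} := [set y | `[< le x y >]].

Lemma up_setS x y : le x y -> up_set y \subset up_set x.
Proof.
move=> xy; apply/subsetP => z; rewrite !inE => /asboolP yz.
by apply/asboolP; exact: le_trans yz.
Qed.

Lemma up_set_proper x y : le x y -> ~ le y x -> up_set y \proper up_set x.
Proof.
move=> xy yx; apply/properP; split; first exact: up_setS.
by exists x; rewrite inE; apply/asboolP => //; apply/asboolPn.
Qed.

Definition lex_rank (t : nat -> T) (k : nat) : nat :=
  lexnum #|T|.+1 (fun j => #|up_set (t j)|) k.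

Lemma lex_rank_lt (t t' : nat -> T) i k : i < k ->
  (forall j, j <= i -> le (t j) (t' j)) -> ~ le (t' i) (t i) ->
  lex_rank t' k < lex_rank t k.
Proof.
move=> ik le_tt' nle; apply: (lexnum_lt (i := i)) => //.
- by move=> j; rewrite ltnS max_card.
- by move=> j ji; apply/subset_leq_card/up_setS/le_tt'.
- by apply/proper_card/up_set_proper => //; apply: le_tt'.
Qed.

End UpSets.

Section Konig.
Variables (T : finType) (ok : nat -> (nat -> T) -> Prop).
Hypotheses (ok_mono : forall m n u, m <= n -> ok n u -> ok m u)
           (ok_prefix : forall n u v, (forall j, j <= n -> u j = v j) -> ok n u -> ok n v).

Definition extendable (n : nat) (u : nat -> T) : Prop :=
  forall m, exists v, ok m v /\ forall j, j < n -> v j = u j.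

Lemma extendable_step n u : extendable n u -> exists x, extendable n.+1 (fupd u n x).
Proof.
move=> ext_u; apply: contrapT => /forallNP no_x.
have [m m_bad] : {m : T -> nat & forall x, ~ exists v,
    ok (m x) v /\ forall j, j < n.+1 -> v j = fupd u n x j}.
  apply: (choice (P := fun x m => ~ exists v,
    ok m v /\ forall j, j < n.+1 -> v j = fupd u n x j)) => x.
  apply: contrapT => /forallNP all_m.
  by apply: (no_x x) => m; apply: contrapT => /all_m.
have [v [ok_v v_u]] := ext_u (\max_x m x).
apply: (m_bad (v n)); exists v; split; first exact: ok_mono (@leq_bigmax T m _) ok_v.
move=> j; rewrite ltnS leq_eqVlt => /orP [/eqP ->|jn]; rewrite /fupd ?eqxx //.
by rewrite ltn_eqF // v_u.
Qed.

Lemma konig : (forall n, exists u, ok n u) -> exists u, forall n, ok n u.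
Proof.
move=> ok_n; have [u0 _] := ok_n 0.
have [next nextP] : {next : nat * (nat -> T) -> T & forall nu,
    extendable nu.1 nu.2 -> extendable nu.1.+1 (fupd nu.2 nu.1 (next nu))}.
  apply: (choice (P := fun nu x =>
    extendable nu.1 nu.2 -> extendable nu.1.+1 (fupd nu.2 nu.1 x))) => -[n u] /=.
  have [/extendable_step [x ext_x]|not_ext] := pselect (extendable n u); first by exists x.
  by exists (u0 0) => /not_ext.
pose fix U n := if n is n'.+1 then fupd (U n') n' (next (n', U n')) else u0.
have ext_U n : extendable n (U n).
  elim: n => [m|n IH]; last exact: (nextP (n, U n)).
  by have [v ok_v] := ok_n m; exists v.
have U_stable j n : j < n -> U n j = U j.+1 j.
  have U_S m : U m.+1 = fupd (U m) m (next (m, U m)) by [].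
  elim: n => [//|n IH] jn; rewrite U_S /fupd.
  case: eqP => [->|/eqP ne]; first by rewrite U_S /fupd eqxx.
  by rewrite IH //; lia.
exists (fun j => U j.+1 j) => n.
have [v [ok_v v_U]] := ext_U n.+1 n.
by apply: ok_prefix ok_v => j jn; rewrite v_U ?U_stable //; lia.
Qed.

End Konig.

Section BackwardSimulation.
Variables (Sigma Q : finType) (A : NBA Sigma Q).

Definition is_bw_sim (R : Q -> Q -> Prop) : Prop :=
  forall p q, R p q -> [/\ fin A p -> fin A q, init A p -> init A q &
    forall p' a, delta A p' a p -> exists2 q', delta A q' a q & R p' q'].

Lemma eq_is_bw_sim : is_bw_sim eq.
Proof. by move=> p _ <-; split=> // p' a dp; exists p'. Qed.

Lemma comp_is_bw_sim R1 R2 : is_bw_sim R1 -> is_bw_sim R2 ->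
  is_bw_sim (fun x z => exists2 y, R1 x y & R2 y z).
Proof.
move=> sim1 sim2 x z [y /sim1 [fin1 init1 back1] /sim2 [fin2 init2 back2]].
split=> [/fin1/fin2|/init1/init2|p' a /back1 [y' /back2 [z' dz' R2z'] R1y']] //.
by exists z' => //; exists y'.
Qed.

Lemma history_rcons (s : nat -> Sigma) (ps : nat -> Q) n :
  history s ps n.+1 = rcons (history s ps n) (s n, ps n.+1).
Proof. by rewrite /history -addn1 iotaD map_cat cats1 add0n addn1. Qed.

Lemma history_scons a (s : nat -> Sigma) p (ps : nat -> Q) n :
  history (scons a s) (scons p ps) n.+1 = (a, ps 0) :: history s ps n.
Proof. by rewrite /history /= -add1n iotaDl -map_comp. Qed.

(* A relational simulation yields a Duplicator strategy: Duplicator remembers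
   the current pair [(p_i, q_i)], which stays in [R], and answers through [R]. *)
Lemma bw_di_sim_of_bw_sim R p q : is_bw_sim R -> R p q -> bw_di_sim A p q.
Proof.
move=> simR Rpq.
have [ans ansP] : {ans : (Q * Q) * (Sigma * Q) -> Q & forall x,
    R x.1.1 x.1.2 -> delta A x.2.2 x.2.1 x.1.1 ->
    delta A (ans x) x.2.1 x.1.2 /\ R x.2.2 (ans x)}.
  apply: (choice (P := fun x y => R x.1.1 x.1.2 -> delta A x.2.2 x.2.1 x.1.1 ->
    delta A y x.2.1 x.1.2 /\ R x.2.2 y)) => -[[p0 q0] [a p']] /=.
  have [/simR [_ _ back] | nR] := pselect (R p0 q0); last by exists q0.
  have [/back [q' dq' Rq'] | nd] := pselect (delta A p' a p0); last by exists q0.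
  by exists q'.
pose step (pq : Q * Q) (x : Sigma * Q) := (x.2, ans (pq, x)).
exists (fun h => (foldl step (p, q) h).2) => s ps ps0 run; cbv zeta.
pose g i := foldl step (p, q) (history s ps i).
have g_S i : g i.+1 = step (g i) (s i, ps i.+1) by rewrite /g history_rcons foldl_rcons.
have g_inv i : (g i).1 = ps i /\ R (ps i) (g i).2.
  elim: i => [|i [g1 Rg]]; first by rewrite ps0.
  by rewrite g_S /=; have [] := ansP (g i, (s i, ps i.+1)); rewrite /= ?g1.
have dup_g i : dup_states (fun h => (foldl step (p, q) h).2) q s ps i = (g i).2 by case: i.
split=> i.
- rewrite (dup_g i.+1) (dup_g i) g_S; have [g1 Rg] := g_inv i.
  by have [] := ansP (g i, (s i, ps i.+1)); rewrite /= ?g1.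
- by rewrite dup_g; have [_ /simR []] := g_inv i.
Qed.

Lemma dup_states_scons (f : dup_strategy Sigma Q) q a (s : nat -> Sigma) p (ps : nat -> Q) i :
  dup_states f q (scons a s) (scons p ps) i.+1 =
  dup_states (fun h => f ((a, ps 0) :: h)) (f [:: (a, ps 0)]) s ps i.
Proof. by case: i => [|i] /=; rewrite history_scons. Qed.

Lemma exists_backward_run (a : Sigma) p : backward_complete A ->
  exists ps : nat -> Q, ps 0 = p /\ forall i, delta A (ps i.+1) a (ps i).
Proof.
move=> bc; have [pre preP] := choice (P := fun r x => delta A x a r) (fun r => bc r a).
by exists (fun i => iter i pre p); split=> // i; apply: preP.
Qed.

(* The letter [a0] is needed only to start a play, without which the game's
   winning condition says nothing about the initial pair. *)
Lemma bw_di_sim_is_bw_sim (a0 : Sigma) : backward_complete A -> is_bw_sim (bw_di_sim A).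
Proof.
move=> bc p q [f win].
have scons_play a s p' ps : delta A p' a p -> ps 0 = p' ->
    (forall i, delta A (ps i.+1) (s i) (ps i)) ->
    forall i, delta A (scons p ps i.+1) (scons a s i) (scons p ps i).
  by move=> dp ps0 run [|i] //=; rewrite ps0.
have [ps [ps0 run]] := exists_backward_run a0 p bc.
have [_ /(_ 0) /=] := win _ _ ps0 run; rewrite ps0 => -[fin_pq init_pq].
split=> // p' a dp.
have [ps' [ps'0 run']] := exists_backward_run a p' bc.
have [moves _] := win _ _ erefl (scons_play _ _ _ _ dp ps'0 run').
exists (f [:: (a, p')]); first by move: (moves 0); rewrite dup_states_scons ps'0.
exists (fun h => f ((a, p') :: h)) => s2 ps2 ps20 run2.
have [moves2 conds2] := win _ _ erefl (scons_play _ _ _ _ dp ps20 run2).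
by split=> i; [move: (moves2 i.+1) | move: (conds2 i.+1)]; rewrite !dup_states_scons ps20.
Qed.

Lemma bw_di_sim_refl p : bw_di_sim A p p.
Proof. exact: bw_di_sim_of_bw_sim eq_is_bw_sim _. Qed.

Lemma bw_di_sim_trans (a0 : Sigma) : backward_complete A ->
  forall p q r, bw_di_sim A p q -> bw_di_sim A q r -> bw_di_sim A p r.
Proof.
move=> bc p q r pq qr; have sim := bw_di_sim_is_bw_sim a0 bc.
by apply: bw_di_sim_of_bw_sim (comp_is_bw_sim sim sim) _; exists q.
Qed.

End BackwardSimulation.

Section Pruning.
Variables (Sigma Q : finType) (A : NBA Sigma Q).
Hypothesis bc : backward_complete A.

Local Notation dominance := (P_rel A (bw_di_strict A) (di_trace_incl A)).
Local Notation pruned := (Prune A dominance).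

Lemma bw_sim_lift_prefix R (w : nat -> Sigma) (tau : nat -> Q) n y : is_bw_sim A R ->
  (forall j, j < n -> delta A (tau j) (w j) (tau j.+1)) -> R (tau n) y ->
  exists q : nat -> Q, [/\ q n = y, forall j, j < n -> delta A (q j) (w j) (q j.+1)
                                  & forall j, j <= n -> R (tau j) (q j)].
Proof.
move=> simR; elim: n y => [|n IH] y run Ry.
  by exists (fun=> y); split=> // j; rewrite leqn0 => /eqP ->.
have [_ _ /(_ _ _ (run n (ltnSn n))) [y' dy' Ry']] := simR _ _ Ry.
have [q [qn qrun qR]] := IH y' (fun j jn => run j (ltnW jn)) Ry'.
exists (fupd q n.+1 y); split=> [|j jn|j jn]; rewrite /fupd ?eqxx //.
- rewrite ifN ?(ltn_eqF jn) //; case: (eqVneq j n) => [->|nj]; first by rewrite eqxx qn.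
  by rewrite eqSS ifN //; apply: qrun; lia.
- by case: eqP => [->//|/eqP nj]; apply: qR; lia.
Qed.

Lemma splice_is_trace (w : nat -> Sigma) (u v : nat -> Q) n :
  (forall j, j < n -> delta A (u j) (w j) (u j.+1)) -> delta A (u n) (w n) (v 0) ->
  is_trace A (fun k => w (n.+1 + k)) v -> is_trace A w (splice u v n).
Proof.
move=> urun un vrun j; case: (ltngtP j n) => [jn|nj|->].
- rewrite !splice_le ?(ltnW jn) //; exact: urun.
- rewrite !splice_gt ?ltnS ?(ltnW nj) //; have := vrun (j - n.+1).
  have -> : n.+1 + (j - n.+1) = j by lia.
  by have -> : (j - n.+1).+1 = j.+1 - n.+1 by lia.
- by rewrite splice_le // splice_gt // subnn.
Qed.

Definition dominating_run (w : nat -> Sigma) (pi tau : nat -> Q) : Prop :=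
  [/\ init A (tau 0), is_trace A w tau & forall j, fin A (pi j) -> fin A (tau j)].

Lemma improve_dominating_run w pi tau i p' r' : dominating_run w pi tau ->
  bw_di_strict A (tau i) p' -> delta A p' (w i) r' -> di_trace_incl A (tau i.+1) r' ->
  exists tau', [/\ dominating_run w pi tau',
    forall j, j <= i -> bw_di_sim A (tau j) (tau' j) & ~ bw_di_sim A (tau' i) (tau i)].
Proof.
move=> [init_tau run dom] [tau_p' p'_tau] dp' incl.
have sim := bw_di_sim_is_bw_sim (w 0) bc.
have [q [qi qrun qsim]] := bw_sim_lift_prefix sim (fun j _ => run j) tau_p'.
have shifted_run : is_trace A (fun k => w (i.+1 + k)) (fun k => tau (i.+1 + k)).
  by move=> k; rewrite /= addnS; apply: run.
have [v [v0 [vrun vfin]]] := incl _ _ (congr1 tau (addn0 i.+1)) shifted_run.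
exists (splice q v i); split=> [|j ji|]; rewrite ?splice_le //; last by rewrite qi.
- split=> [|| j fin_pi].
  + by rewrite splice_le //; have [_ /(_ init_tau)] := sim _ _ (qsim 0 (leq0n i)).
  + by apply: splice_is_trace; rewrite ?qi ?v0.
  + case: (leqP j i) => [ji|ij].
      by rewrite splice_le //; have [/(_ (dom j fin_pi))] := sim _ _ (qsim j ji).
    rewrite splice_gt //; apply: vfin.
    have -> : i.+1 + (j - i.+1) = j by lia.
    exact: dom.
- exact: qsim.
Qed.

Lemma exists_pruned_prefix w pi tau k : dominating_run w pi tau ->
  exists tau', dominating_run w pi tau' /\
    forall j, j < k -> delta pruned (tau' j) (w j) (tau' j.+1).
Proof.
move=> dom_tau; have [n] := ubnP (lex_rank (bw_di_sim A) tau k).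
elim: n tau dom_tau => [//|n IH] tau dom_tau rank_tau.
have [all_pruned|] := pselect (forall j, j < k -> delta pruned (tau j) (w j) (tau j.+1)).
  by exists tau.
move=> /existsNP [j /not_implyP [jk not_pruned]].
have [_ run _] := dom_tau.
have [[[p' a] r'] [dt' [_ [_ [/= wj_a [strict incl]]]]]] :
    exists t', in_delta A t' /\ dominance (tau j, w j, tau j.+1) t'.
  by apply: contrapT => no_t'; apply: not_pruned; split; [exact: run | exact: no_t'].
subst a.
have [tau' [dom_tau' le_prefix strict']] := improve_dominating_run dom_tau strict dt' incl.
apply: IH dom_tau' _.
have := lex_rank_lt (@bw_di_sim_refl _ _ A) (bw_di_sim_trans (w 0) bc) jk le_prefix strict'.
lia.
Qed.

Definition pruned_prefix_run (w : nat -> Sigma) (pi : nat -> Q) (n : nat) (q : nat -> Q) : Prop :=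
  [/\ init A (q 0), forall j, j < n -> delta pruned (q j) (w j) (q j.+1)
    & forall j, j <= n -> fin A (pi j) -> fin A (q j)].

Lemma pruned_dominating_run w pi tau : dominating_run w pi tau ->
  exists q, [/\ init A (q 0), is_trace pruned w q & forall j, fin A (pi j) -> fin A (q j)].
Proof.
move=> dom_tau.
have ok_mono m n q : m <= n -> pruned_prefix_run w pi n q -> pruned_prefix_run w pi m q.
  by move=> mn [q0 run fin_q]; split=> // j jm; [apply: run | apply: fin_q]; lia.
have ok_prefix n q q' : (forall j, j <= n -> q j = q' j) ->
    pruned_prefix_run w pi n q -> pruned_prefix_run w pi n q'.
  move=> qq' [q0 run fin_q]; split=> [|j jn|j jn].
  - by rewrite -qq'.
  - by rewrite -!qq' ?(ltnW jn) //; exact: run.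
  - by rewrite -qq' //; exact: fin_q.
have ok_n n : exists q, pruned_prefix_run w pi n q.
  have [q [[q0 _ fin_q] run]] := exists_pruned_prefix n dom_tau.
  by exists q; split=> // j _; exact: fin_q.
have [q ok_q] := konig ok_mono ok_prefix ok_n.
exists q; split=> [|j|j]; first by have [] := ok_q 0.
- by have [_ /(_ j (ltnSn j))] := ok_q j.+1.
- by have [_ _ /(_ j (leqnn j))] := ok_q j.
Qed.

End Pruning.

Theorem theorem5p3 (Sigma Q : finType) (A : NBA Sigma Q) :
  forward_complete A -> backward_complete A ->
  forall w : nat -> Sigma,
    accepts (Prune A (P_rel A (bw_di_strict A) (di_trace_incl A))) w <-> accepts A w.
Proof.
move=> _ bc w; split.
- by case=> t [t0 [run fair]]; exists t; split=> //; split=> // i; have [] := run i.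
- case=> pi [pi0 [run fair]].
  have [q [q0 qrun dom]] := pruned_dominating_run bc (tau := pi) (And3 pi0 run (fun j h => h)).
  exists q; split=> //; split=> // n.
  by have [m [nm fin_m]] := fair n; exists m; split=> //; apply: dom.
Qed.
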